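(* If $\phi$ is dinatural in its $k$-th variable and $\psi$ is dinatural in its $i$-th variable, then the $i$-th horizontal composite $\phi\ast_i\psi$ is dinatural in its $(i-1+k)$-th variable (the variable $A_k$).
   Context: Notation: $k$ also denotes $\{1,\dots,k\}$; $\mathbb C^\alpha=\mathbb C^{\alpha_1}\times\cdots$ with $\mathbb C^+=\mathbb C$, $\mathbb C^-=\mathbb C^{op}$; for $\mathbf A=(A_1,\dots,A_n)$, $\sigma\colon k\to n$, $\mathbf A\sigma=(A_{\sigma1},\dots,A_{\sigma k})$; a morphism in a contravariant argument is read in $\mathbb C^{op}$. A transformation $\phi\colon F\to G$ ($F\colon\mathbb C^\alpha\to\mathbb C$, $G\colon\mathbb C^\beta\to\mathbb C$) of type $|\alpha|\xrightarrow{\sigma}n\xleftarrow{\tau}|\beta|$ is a family $\phi_{\mathbf A}\colon F(\mathbf A\sigma)\to G(\mathbf A\tau)$, $\mathbf A\in\mathrm{Ob}(\mathbb C)^n$. $\mathbf A[X,Y/i]\sigma$ is the tuple whose $j$-th entry is $X$ if $\sigma j=i,\alpha_j=-$, $Y$ if $\sigma j=i,\alpha_j=+$, $A_{\sigma j}$ (or $1_{A_{\sigma j}}$ for morphisms) otherwise; $\mathbf A[X/i]=\mathbf A[X,X/i]$. $\phi$ is dinatural in its $i$-th variable if for all $A_j$ ($j\ne i$) and $f\colon A\to B$: $G(\mathbf A[A,f/i]\tau)\circ\phi_{\mathbf A[A/i]}\circ F(\mathbf A[f,A/i]\sigma)=G(\mathbf A[f,B/i]\tau)\circ\phi_{\mathbf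 A[B/i]}\circ F(\mathbf A[B,f/i]\sigma)$. Horizontal composition: let $F\colon\mathbb C^\alpha\to\mathbb C$, $G\colon\mathbb C^\beta\to\mathbb C$, $H\colon\mathbb C^\gamma\to\mathbb C$, $K\colon\mathbb C^\delta\to\mathbb C$, $\phi\colon F\to G$ of type $|\alpha|\xrightarrow{\sigma}n\xleftarrow{\tau}|\beta|$ with variables $\mathbf A=(A_1,\dots,A_n)$, and $\psi\colon H\to K$ of type $|\gamma|\xrightarrow{\eta}m\xleftarrow{\theta}|\delta|$ with variables $\mathbf B=(B_1,\dots,B_m)$, dinatural in its $i$-th variable. The $i$-th horizontal composite $\phi\ast_i\psi$ is the transformation with variables $\mathbf B[\mathbf A/i]=(B_1,\dots,B_{i-1},A_1,\dots,A_n,B_{i+1},\dots,B_m)$ (so $A_k$ is its $(i-1+k)$-th variable). Its domain functor is obtained from $H$ by substituting, into each argument position $u$ with $\eta u=i$, the functor $F$ if $\gamma_u=+$ and $G^{op}$ if $\gamma_u=-$ (other positions unchanged); its codomain functor is obtained from $K$ by substituting, into each position $v$ with $\theta v=i$, $G$ if $\delta_v=+$ and $F^{op}$ if $\delta_v=-$. In its type, an argument coming from the $j$-th argument of a copy of $F$ is assigned variable $A_{\sigma j}$, one coming from the $j$-th argument of a copy of $G$ variable $A_{\tau j}$, and an unchanged position $u$ of $H$ (resp. $v$ of $K$) variable $B_{\eta u}$ (resp. $B_{\theta v}$). Its component at $\mathbf B[\mathbf A/i]$ is the morphism $H(\mathbf B[G(\mathbf A\tau),F(\mathbf A\sigma)/i]\eta)\to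 K(\mathbf B[F(\mathbf A\sigma),G(\mathbf A\tau)/i]\theta)$ given by $K(\mathbf B[F(\mathbf A\sigma),\phi_{\mathbf A}/i]\theta)\circ\psi_{\mathbf B[F(\mathbf A\sigma)/i]}\circ H(\mathbf B[\phi_{\mathbf A},F(\mathbf A\sigma)/i]\eta)$, equal to $K(\mathbf B[\phi_{\mathbf A},G(\mathbf A\tau)/i]\theta)\circ\psi_{\mathbf B[G(\mathbf A\tau)/i]}\circ H(\mathbf B[G(\mathbf A\tau),\phi_{\mathbf A}/i]\eta)$ by dinaturality of $\psi$. *)

From mathcomp Require Import all_boot.

Unset Printing Implicit Defensive.

(* Categories, in the (standard) single-sorted "arrows only" presentation:   *)
(* every arrow f has a source and a target; comp g f is g o f and its value  *)
(* is only constrained when tgt f = src g.                                   *)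
Record Category := MkCategory {
  Ob : Type;
  Arr : Type;
  src : Arr -> Ob;
  tgt : Arr -> Ob;
  idm : Ob -> Arr;
  comp : Arr -> Arr -> Arr;
  src_idm : forall X, src (idm X) = X;
  tgt_idm : forall X, tgt (idm X) = X;
  src_comp : forall f g, tgt f = src g -> src (comp g f) = src f;
  tgt_comp : forall f g, tgt f = src g -> tgt (comp g f) = tgt g;
  comp_idl : forall f, comp (idm (tgt f)) f = f;
  comp_idr : forall f, comp f (idm (src f)) = f;
  comp_assoc : forall f g h, tgt f = src g -> tgt g = src h ->
    comp h (comp g f) = comp (comp h g) f
}.
Arguments src {C} f : rename.
Arguments tgt {C} f : rename.
Arguments idm {C} X : rename.
Arguments comp {C} g f : rename.

(* Functors C^a -> C, where the argument positions form a type I and         *)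
(* a : I -> bool gives the variance (true = +, i.e. C; false = -, i.e. C^op). *)
(* An object of C^a is a family X : I -> Ob C; a morphism of C^a is a family *)
(* of arrows x : I -> Arr C, x j read in C^op when a j = false.              *)
Record PreFunctor (C : Category) {I : Type} (a : I -> bool) := MkPreFunctor {
  fo : (I -> Ob C) -> Ob C;
  fm : (I -> Arr C) -> Arr C
}.
Arguments fo {C I a} F X : rename.
Arguments fm {C I a} F x : rename.

Definition is_functor {C : Category} {I : Type} {a : I -> bool}
  (F : PreFunctor C a) : Prop :=
  [/\ (forall x : I -> Arr C,
         src (fm F x) = fo F (fun j => if a j then src (x j) else tgt (x j))),
      (forall x : I -> Arr C,
         tgt (fm F x) = fo F (fun j => if a j then tgt (x j) else src (x j))),
      (forall X : I -> Ob C, fm F (fun j => idm (X j)) = idm (fo F X)) &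
      (forall x y : I -> Arr C,
         (forall j, if a j then tgt (x j) = src (y j) else tgt (y j) = src (x j)) ->
         fm F (fun j => if a j then comp (y j) (x j) else comp (x j) (y j))
         = comp (fm F y) (fm F x))].

(* Transformations phi : F -> G of type  I_F --sg--> V <--tau-- I_G          *)
(* (V = the set of variables): phi A : F(A sg) -> G(A tau).                  *)
Definition is_transformation {C : Category} {IF IG V : Type}
  {aF : IF -> bool} {aG : IG -> bool} (F : PreFunctor C aF) (G : PreFunctor C aG)
  (sg : IF -> V) (tau : IG -> V) (phi : (V -> Ob C) -> Arr C) : Prop :=
  forall A : V -> Ob C,
    src (phi A) = fo F (fun j => A (sg j)) /\ tgt (phi A) = fo G (fun j => A (tau j)).

Definition subst_ob {C : Category} {V : eqType} (A : V -> Ob C) (v : V) (X : Ob C)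
  : V -> Ob C := fun w => if w == v then X else A w.

Definition subst_mor {C : Category} {I : Type} {V : eqType} (a : I -> bool)
  (sg : I -> V) (A : V -> Ob C) (v : V) (x y : Arr C) : I -> Arr C :=
  fun j => if sg j == v then (if a j then y else x) else idm (A (sg j)).

Definition dinatural {C : Category} {IF IG : Type} {V : eqType}
  {aF : IF -> bool} {aG : IG -> bool} (F : PreFunctor C aF) (G : PreFunctor C aG)
  (sg : IF -> V) (tau : IG -> V) (phi : (V -> Ob C) -> Arr C) (v : V) : Prop :=
  forall (A : V -> Ob C) (f : Arr C),
    let X := src f in let Y := tgt f in
    comp (fm G (subst_mor aG tau A v (idm X) f))
      (comp (phi (subst_ob A v X)) (fm F (subst_mor aF sg A v f (idm X))))
    =
    comp (fm G (subst_mor aG tau A v f (idm Y)))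
      (comp (phi (subst_ob A v Y)) (fm F (subst_mor aF sg A v (idm Y) f))).

(* Variables of the composite: B[A/i] = (B_k)_{k <> i} together with A.     *)
Definition CompVar {VB : eqType} (i : VB) (VA : Type) : Type :=
  ({k : VB | k != i} + VA)%type.

(* Argument positions of the functor obtained from H (positions IH, variances
   aH, type map eta) by substituting P into each position u with eta u = i
   and aH u = +, and N^op into each position u with eta u = i and aH u = -:
   unchanged positions, (u, j) with j a position of P, (u, j) with j a
   position of N. *)
Definition SubI {IH : Type} {VB : eqType} (eta : IH -> VB) (i : VB)
  (aH : IH -> bool) (IP IN : Type) : Type :=
  (({u : IH | eta u != i} + ({u : IH | (eta u == i) && aH u} * IP))
   + ({u : IH | (eta u == i) && ~~ aH u} * IN))%type.

Definition subst_var {IH : Type} {VB : eqType} (eta : IH -> VB) (i : VB)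
  (aH : IH -> bool) {IP IN : Type} (aP : IP -> bool) (aN : IN -> bool)
  (z : SubI eta i aH IP IN) : bool :=
  match z with
  | inl (inl u) => aH (sval u)
  | inl (inr (_, j)) => aP j
  | inr (_, j) => ~~ aN j
  end.

Definition subst_type {IH : Type} {VB : eqType} (eta : IH -> VB) (i : VB)
  (aH : IH -> bool) {IP IN VA : Type} (sP : IP -> VA) (sN : IN -> VA)
  (z : SubI eta i aH IP IN) : CompVar i VA :=
  match z with
  | inl (inl u) => inl (exist (fun k => k != i) (eta (sval u)) (proj2_sig u))
  | inl (inr (_, j)) => inr (sP j)
  | inr (_, j) => inr (sN j)
  end.

Inductive pos_kind {IH : Type} {VB : eqType} (eta : IH -> VB) (i : VB)
  (aH : IH -> bool) (u : IH) : Type :=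
| PKplain of eta u != i
| PKpos of (eta u == i) && aH u
| PKneg of (eta u == i) && ~~ aH u.
Arguments PKplain {IH VB eta i aH u}.
Arguments PKpos {IH VB eta i aH u}.
Arguments PKneg {IH VB eta i aH u}.

Lemma kind_lem1 {b c : bool} : ~~ b = false -> c = true -> b && c.
Proof. by case: b; case: c. Qed.
Lemma kind_lem2 {b c : bool} : ~~ b = false -> c = false -> b && ~~ c.
Proof. by case: b; case: c. Qed.

Definition kind {IH : Type} {VB : eqType} (eta : IH -> VB) (i : VB)
  (aH : IH -> bool) (u : IH) : pos_kind eta i aH u :=
  match (eta u != i) as b return (eta u != i) = b -> pos_kind eta i aH u with
  | true => fun e => PKplain e
  | false => fun e =>
      match aH u as c return aH u = c -> pos_kind eta i aH u with
      | true => fun e' => PKpos (kind_lem1 e e')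
      | false => fun e' => PKneg (kind_lem2 e e')
      end erefl
  end erefl.

Definition subst_functor {C : Category} {IH : Type} {VB : eqType}
  {aH : IH -> bool} (H : PreFunctor C aH) (eta : IH -> VB) (i : VB)
  {IP IN : Type} {aP : IP -> bool} {aN : IN -> bool}
  (P : PreFunctor C aP) (N : PreFunctor C aN)
  : PreFunctor C (subst_var eta i aH aP aN) :=
  @MkPreFunctor C _ (subst_var eta i aH aP aN)
    (fun X => fo H (fun u =>
       match kind eta i aH u with
       | PKplain e => X (inl (inl (exist _ u e)))
       | PKpos e => fo P (fun j => X (inl (inr (exist _ u e, j))))
       | PKneg e => fo N (fun j => X (inr (exist _ u e, j)))
       end))
    (fun x => fm H (fun u =>
       match kind eta i aH u with
       | PKplain e => x (inl (inl (exist _ u e)))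
       | PKpos e => fm P (fun j => x (inl (inr (exist _ u e, j))))
       | PKneg e => fm N (fun j => x (inr (exist _ u e, j)))
       end)).

(* From an object family Y over the composite's variables, recover B (its
   i-th entry, which is irrelevant, is set to the default d). *)
Definition restrB {C : Category} {VB : eqType} {i : VB} {VA : Type}
  (Y : CompVar i VA -> Ob C) (d : Ob C) : VB -> Ob C :=
  fun k => match (k != i) as b return (k != i) = b -> Ob C with
           | true => fun e => Y (inl (exist (fun k => k != i) k e))
           | false => fun _ => d
           end erefl.


Definition hcomp_dom {C : Category} {IF IG IH : Type} {VB : eqType}
  {aF : IF -> bool} {aG : IG -> bool} {aH : IH -> bool}
  (F : PreFunctor C aF) (G : PreFunctor C aG) (H : PreFunctor C aH)
  (eta : IH -> VB) (i : VB) :=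
  subst_functor H eta i F G.

Definition hcomp_cod {C : Category} {IF IG IK : Type} {VB : eqType}
  {aF : IF -> bool} {aG : IG -> bool} {aK : IK -> bool}
  (F : PreFunctor C aF) (G : PreFunctor C aG) (K : PreFunctor C aK)
  (theta : IK -> VB) (i : VB) :=
  subst_functor K theta i G F.

Definition hcomp_tdom {IF IG IH VA : Type} {VB : eqType} (aH : IH -> bool)
  (sg : IF -> VA) (tau : IG -> VA) (eta : IH -> VB) (i : VB) :=
  subst_type eta i aH sg tau.

Definition hcomp_tcod {IF IG IK VA : Type} {VB : eqType} (aK : IK -> bool)
  (sg : IF -> VA) (tau : IG -> VA) (theta : IK -> VB) (i : VB) :=
  subst_type theta i aK tau sg.

Definition hcomp {C : Category} {IF IH IK VA : Type} {VB : eqType}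
  {aF : IF -> bool} {aH : IH -> bool} {aK : IK -> bool}
  (F : PreFunctor C aF) (sg : IF -> VA)
  (phi : (VA -> Ob C) -> Arr C)
  (H : PreFunctor C aH) (K : PreFunctor C aK)
  (eta : IH -> VB) (theta : IK -> VB) (psi : (VB -> Ob C) -> Arr C) (i : VB)
  : (CompVar i VA -> Ob C) -> Arr C :=
  fun Y =>
    let A := fun l => Y (inr l) in
    let FA := fo F (fun j => A (sg j)) in
    let B := restrB Y FA in
    comp (fm K (subst_mor aK theta B i (idm FA) (phi A)))
      (comp (psi (subst_ob B i FA))
         (fm H (subst_mor aH eta B i (phi A) (idm FA)))).

From mathcomp Require Import all_boot.
From Stdlib Require Import FunctionalExtensionality.
(* Imported last, so that the categorical composition [comp] of Defs shadows
   the function composition of ssrfun. *)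
From Pilot Require Import Defs.

(* Fix psi and the variables B other than B_i.  For an arrow x : P -> Q put
       wedge x := K(B[P,x/i]) o psi_{B[P/i]} o H(B[x,P/i]),
   an arrow H(B[Q,P/i]) -> K(B[P,Q/i]); dinaturality of psi says precisely that
   it also equals K(B[x,Q/i]) o psi_{B[Q/i]} o H(B[Q,x/i]).  Functoriality of H
   and K gives a post-composition law, dinaturality a pre-composition law, and
   together they yield the extranaturality law
       K(B[h,g/i]) o wedge x o H(B[g,h/i]) = wedge (g o x o h).
   The component of phi *_i psi at B[A/i] is wedge phi_A, and the substituted
   functors act on B[A[x,y/k]/i] through F and G.  So both sides of the
   dinaturality square of phi *_i psi in A_k are wedges of the two sides of the
   dinaturality square of phi in A_k, which are equal. *)

Lemma comp_idid (C : Category) (X : Ob C) : comp (idm X) (idm X) = idm X.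
Proof. by have := comp_idl _ (idm X); rewrite tgt_idm. Qed.

Section SubstitutedAction.

Variables (C : Category) (I : Type) (V : eqType) (a : I -> bool).
Variables (F : PreFunctor C a) (t : I -> V) (B : V -> Ob C) (v : V).
Hypothesis FF : is_functor F.

Local Notation Fm x y := (fm F (subst_mor a t B v x y)).

Definition subst_fo (Pn Pp : Ob C) : Ob C :=
  fo F (fun u => if t u == v then (if a u then Pp else Pn) else B (t u)).

Lemma fo_subst_ob (P : Ob C) : fo F (fun u => subst_ob B v P (t u)) = subst_fo P P.
Proof.
rewrite /subst_fo /subst_ob; congr (fo F _); apply: functional_extensionality => u.
by case: (t u == v); case: (a u).
Qed.

Lemma fm_subst_src (x y : Arr C) : src (Fm x y) = subst_fo (tgt x) (src y).
Proof.
case: FF => -> _ _ _; rewrite /subst_fo /subst_mor; congr (fo F _).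
apply: functional_extensionality => u.
by case: (t u == v); case: (a u); rewrite ?src_idm ?tgt_idm.
Qed.

Lemma fm_subst_tgt (x y : Arr C) : tgt (Fm x y) = subst_fo (src x) (tgt y).
Proof.
case: FF => _ -> _ _; rewrite /subst_fo /subst_mor; congr (fo F _).
apply: functional_extensionality => u.
by case: (t u == v); case: (a u); rewrite ?src_idm ?tgt_idm.
Qed.

Lemma fm_subst_comp (x1 y1 x2 y2 : Arr C) :
  tgt y1 = src y2 -> tgt x2 = src x1 ->
  comp (Fm x2 y2) (Fm x1 y1) = Fm (comp x1 x2) (comp y2 y1).
Proof.
case: FF => _ _ _ Fcomp ey ex; rewrite -Fcomp.
  congr (fm F _); apply: functional_extensionality => u; rewrite /subst_mor.
  by case: (t u == v); case: (a u); rewrite ?comp_idid.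
move=> u; rewrite /subst_mor.
by case: (t u == v); case: (a u); rewrite ?src_idm ?tgt_idm.
Qed.

Lemma fm_subst_cov_first (x y : Arr C) :
  Fm x y = comp (Fm x (idm (tgt y))) (Fm (idm (tgt x)) y).
Proof. by rewrite fm_subst_comp ?tgt_idm ?src_idm // !comp_idl. Qed.

Lemma fm_subst_contra_first (x y : Arr C) :
  Fm x y = comp (Fm (idm (src x)) y) (Fm x (idm (src y))).
Proof. by rewrite fm_subst_comp ?tgt_idm ?src_idm // !comp_idr. Qed.

End SubstitutedAction.

Arguments subst_fo {C I V a} F t B v Pn Pp.
Arguments fo_subst_ob {C I V a F t B v} P.
Arguments fm_subst_src {C I V a F t B v} FF x y.
Arguments fm_subst_tgt {C I V a F t B v} FF x y.
Arguments fm_subst_comp {C I V a F t B v} FF x1 y1 x2 y2.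
Arguments fm_subst_cov_first {C I V a F t B v} FF x y.
Arguments fm_subst_contra_first {C I V a F t B v} FF x y.

Ltac endpoints := first [ done
  | rewrite fm_subst_src //; endpoints | rewrite fm_subst_tgt //; endpoints
  | rewrite src_idm; endpoints | rewrite tgt_idm; endpoints
  | rewrite src_comp; endpoints | rewrite tgt_comp; endpoints
  | match goal with E : src _ = _ |- _ => rewrite E; endpoints
                  | E : tgt _ = _ |- _ => rewrite E; endpoints end ].

Ltac assoc_right :=
  repeat (rewrite -comp_assoc; [| endpoints | endpoints]).

Section Wedge.

Variables (C : Category) (IH IK : Type) (VB : eqType).
Variables (aH : IH -> bool) (aK : IK -> bool).
Variables (H : PreFunctor C aH) (K : PreFunctor C aK).
Variables (eta : IH -> VB) (theta : IK -> VB) (psi : (VB -> Ob C) -> Arr C).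
Variables (i : VB) (B : VB -> Ob C).
Hypotheses (FH : is_functor H) (FK : is_functor K).
Hypothesis TH : is_transformation H K eta theta psi.
Hypothesis DH : dinatural H K eta theta psi i.

Local Notation Hm x y := (fm H (subst_mor aH eta B i x y)).
Local Notation Km x y := (fm K (subst_mor aK theta B i x y)).
Local Notation psiB P := (psi (subst_ob B i P)).

Definition wedge (x : Arr C) : Arr C :=
  comp (Km (idm (src x)) x) (comp (psiB (src x)) (Hm x (idm (src x)))).

Lemma psi_subst_src (P : Ob C) : src (psiB P) = subst_fo H eta B i P P.
Proof. by rewrite (TH _).1 fo_subst_ob. Qed.

Lemma psi_subst_tgt (P : Ob C) : tgt (psiB P) = subst_fo K theta B i P P.
Proof. by rewrite (TH _).2 fo_subst_ob. Qed.

Lemma wedge_dinatural (f : Arr C) :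
  wedge f = comp (Km f (idm (tgt f))) (comp (psiB (tgt f)) (Hm (idm (tgt f)) f)).
Proof. exact: DH. Qed.

(* Post-composition law, from functoriality alone. *)
Lemma wedge_postcomp (x g : Arr C) : tgt x = src g ->
  comp (Km (idm (src x)) g) (comp (wedge x) (Hm g (idm (src x))))
  = wedge (comp g x).
Proof.
move=> exg; have := psi_subst_src (src x); have := psi_subst_tgt (src x).
rewrite /wedge src_comp // => pt ps.
have eK : comp (Km (idm (src x)) g) (Km (idm (src x)) x) = Km (idm (src x)) (comp g x).
  by rewrite fm_subst_comp ?comp_idid; endpoints.
have eH : comp (Hm x (idm (src x))) (Hm g (idm (src x))) = Hm (comp g x) (idm (src x)).
  by rewrite fm_subst_comp ?comp_idid; endpoints.
by rewrite -eK -eH; assoc_right.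
Qed.

(* Pre-composition law: the actions on the two slots of H and K commute, and
   dinaturality moves h across psi. *)
Lemma wedge_precomp (h x : Arr C) : tgt h = src x ->
  comp (Km h (idm (tgt x))) (comp (wedge x) (Hm (idm (tgt x)) h))
  = wedge (comp x h).
Proof.
move=> ehx; have := psi_subst_src (src x); have := psi_subst_tgt (src x).
move=> pt ps.
have eK : comp (Km h (idm (tgt x))) (Km (idm (src x)) x)
        = comp (Km (idm (src h)) x) (Km h (idm (src x))).
  by rewrite -[RHS]fm_subst_contra_first // -ehx -fm_subst_cov_first.
have eH : comp (Hm x (idm (src x))) (Hm (idm (tgt x)) h)
        = comp (Hm (idm (src x)) h) (Hm x (idm (src h))).
  by rewrite -[RHS]fm_subst_contra_first // -ehx -fm_subst_cov_first.
rewrite -wedge_postcomp // (wedge_dinatural h) ehx /wedge; assoc_right.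
rewrite comp_assoc; [| endpoints | endpoints].
by rewrite eK eH; assoc_right.
Qed.

Lemma wedge_src (x : Arr C) : src (wedge x) = subst_fo H eta B i (tgt x) (src x).
Proof.
have := psi_subst_src (src x); have := psi_subst_tgt (src x).
by rewrite /wedge => pt ps; endpoints.
Qed.

Lemma wedge_tgt (x : Arr C) : tgt (wedge x) = subst_fo K theta B i (src x) (tgt x).
Proof.
have := psi_subst_src (src x); have := psi_subst_tgt (src x).
by rewrite /wedge => pt ps; endpoints.
Qed.

Lemma wedge_extranatural (h x g : Arr C) : tgt h = src x -> tgt x = src g ->
  comp (Km h g) (comp (wedge x) (Hm g h)) = wedge (comp g (comp x h)).
Proof.
move=> ehx exg; have := wedge_src x; have := wedge_tgt x => wt ws.
rewrite -wedge_postcomp ?tgt_comp // src_comp // -wedge_precomp //.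
rewrite (fm_subst_contra_first FK h g) (fm_subst_contra_first FH g h) -exg.
by assoc_right.
Qed.
End Wedge.

Arguments wedge {C IH IK VB aH aK} H K eta theta psi i B x.
Arguments wedge_extranatural {C IH IK VB aH aK H K eta theta psi i B} FH FK TH DH h x g.

Lemma restrB_eq (C : Category) (VB : eqType) (i : VB) (VA : Type)
  (Y : CompVar i VA -> Ob C) (d : Ob C) (w : VB) (e : w != i) :
  restrB Y d w = Y (inl (exist _ w e)).
Proof.
rewrite /restrB; move: (erefl (w != i)).
case: {2 3}(w != i) => e'; last by rewrite e in e'.
by rewrite (bool_irrelevance e' e).
Qed.

Lemma subst_ob_ext (C : Category) (V : eqType) (B1 B2 : V -> Ob C) (v : V) (P : Ob C) :
  (forall w, w != v -> B1 w = B2 w) -> subst_ob B1 v P = subst_ob B2 v P.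
Proof.
move=> eB; apply: functional_extensionality => w; rewrite /subst_ob.
by case: eqP => // /eqP /eB.
Qed.

Lemma subst_mor_ext (C : Category) (I : Type) (V : eqType) (a : I -> bool)
  (t : I -> V) (B1 B2 : V -> Ob C) (v : V) (x y : Arr C) :
  (forall w, w != v -> B1 w = B2 w) -> subst_mor a t B1 v x y = subst_mor a t B2 v x y.
Proof.
move=> eB; apply: functional_extensionality => u; rewrite /subst_mor.
by case: eqP => // /eqP /eB ->.
Qed.

(* The domain (resp. codomain) functor of a horizontal composite, applied to
   B[A[x,y/k]/i], is H(B[N(A[y,x/k]), P(A[x,y/k])/i]): the copies of N sit in
   contravariant positions, so x and y are exchanged there. *)
Lemma fm_subst_functor {C : Category} {IH : Type} {VB : eqType} {aH : IH -> bool}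
  {H : PreFunctor C aH} {eta : IH -> VB} {i : VB} {IP IN : Type}
  {aP : IP -> bool} {aN : IN -> bool} {P : PreFunctor C aP} {N : PreFunctor C aN}
  {VA : eqType} {sP : IP -> VA} {sN : IN -> VA} {Y : CompVar i VA -> Ob C}
  {k : VA} {x y : Arr C} (d : Ob C) :
  let A := fun l => Y (inr l) in
  fm (subst_functor H eta i P N)
     (subst_mor (subst_var eta i aH aP aN) (subst_type eta i aH sP sN) Y (inr k) x y)
  = fm H (subst_mor aH eta (restrB Y d) i
       (fm N (subst_mor aN sN A k y x)) (fm P (subst_mor aP sP A k x y))).
Proof.
rewrite /=; congr (fm H _); apply: functional_extensionality => u.
case: (kind eta i aH u) => e.
- by rewrite /subst_mor /= (negbTE e) (restrB_eq _ _ _ _ _ _ _ e).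
- case/andP: (e) => /eqP e1 e2; rewrite /subst_mor /= e1 eqxx e2.
  by congr (fm P _); apply: functional_extensionality.
- case/andP: (e) => /eqP e1 e2; rewrite /subst_mor /= e1 eqxx (negbTE e2).
  by congr (fm N _); apply: functional_extensionality => j /=; case: (aN j).
Qed.

Lemma hcomp_subst {C : Category} {IF IG IH IK : Type} {VA VB : eqType}
  {aF : IF -> bool} {aG : IG -> bool} {aH : IH -> bool} {aK : IK -> bool}
  {F : PreFunctor C aF} {G : PreFunctor C aG} {H : PreFunctor C aH} {K : PreFunctor C aK}
  {sg : IF -> VA} {tau : IG -> VA} {eta : IH -> VB} {theta : IK -> VB}
  {phi : (VA -> Ob C) -> Arr C} {psi : (VB -> Ob C) -> Arr C} {i : VB}
  {Y : CompVar i VA -> Ob C} {k : VA} {Z : Ob C} (d : Ob C) :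
  is_transformation F G sg tau phi ->
  hcomp F sg phi H K eta theta psi i (subst_ob Y (inr k) Z)
  = wedge H K eta theta psi i (restrB Y d) (phi (subst_ob (fun l => Y (inr l)) k Z)).
Proof.
move=> TF.
have eA : (fun l => subst_ob Y (inr k) Z (inr l)) = subst_ob (fun l => Y (inr l)) k Z.
  exact: functional_extensionality.
have eB d' w : w != i -> restrB (subst_ob Y (inr k) Z) d' w = restrB Y d w.
  by move=> e; rewrite !(restrB_eq _ _ _ _ _ _ _ e).
rewrite /hcomp /wedge eA -(TF (subst_ob (fun l => Y (inr l)) k Z)).1.
by rewrite (subst_ob_ext _ _ _ _ _ _ (eB _)) !(subst_mor_ext _ _ _ _ _ _ _ _ _ _ (eB _)).
Qed.

Theorem mainTheorem10 (C : Category) (n m p q r s : nat)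
  (alpha : 'I_p -> bool) (beta : 'I_q -> bool)
  (gamma : 'I_r -> bool) (delta : 'I_s -> bool)
  (F : PreFunctor C alpha) (G : PreFunctor C beta)
  (H : PreFunctor C gamma) (K : PreFunctor C delta)
  (sg : 'I_p -> 'I_n) (tau : 'I_q -> 'I_n)
  (eta : 'I_r -> 'I_m) (theta : 'I_s -> 'I_m)
  (phi : ('I_n -> Ob C) -> Arr C) (psi : ('I_m -> Ob C) -> Arr C)
  (i : 'I_m) (k : 'I_n) :
  is_functor F -> is_functor G -> is_functor H -> is_functor K ->
  is_transformation F G sg tau phi ->
  is_transformation H K eta theta psi ->
  dinatural F G sg tau phi k ->
  dinatural H K eta theta psi i ->
  dinatural (hcomp_dom F G H eta i) (hcomp_cod F G K theta i)
    (hcomp_tdom gamma sg tau eta i) (hcomp_tcod delta sg tau theta i)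
    (hcomp F sg phi H K eta theta psi i) (inr k).
Proof.
move=> FF FG FH FK TF TH DF DH Y f; cbv zeta.
rewrite /hcomp_dom /hcomp_cod /hcomp_tdom /hcomp_tcod.
(* Express both sides through F, G and wedges of psi along components of phi. *)
rewrite !(fm_subst_functor (src f)).
rewrite !(hcomp_subst (src f) TF).
set A := fun l => Y (inr l).
have phi_src P : src (phi (subst_ob A k P)) = subst_fo F sg A k P P.
  by rewrite (TF _).1 fo_subst_ob.
have phi_tgt P : tgt (phi (subst_ob A k P)) = subst_fo G tau A k P P.
  by rewrite (TF _).2 fo_subst_ob.
(* Absorb the outer arrows into the wedges; their arguments are then the two
   sides of the dinaturality square of phi. *)
rewrite !(wedge_extranatural FH FK TH DH);
  try by rewrite ?fm_subst_src ?fm_subst_tgt ?phi_src ?phi_tgt ?src_idm ?tgt_idm.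
by rewrite (DF A f).
Qed.
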